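(* Let $A$ be a finite set, let $P$ be a probability measure on $(A^{\mathbb{Z}},\mathfrak{A}^{\mathbb{Z}})$ (not necessarily stationary), and let $h\ge 0$. Then $P$ satisfies condition (B) with respect to $h$ if and only if $P$ satisfies condition (B* ) with respect to $h$.
   Context: $\mathfrak{A}^{\mathbb{Z}}$ is the $\sigma$-field on $A^{\mathbb{Z}}$ generated by cylinder sets. For $n\ge 1$, $A^{(n)}:=\prod_{i=1}^n A$ and $P^{(n)}$ denotes the marginal of $P$ on the coordinates $1,\dots,n$, i.e. $P^{(n)}(\mathbf{x})=P(\{\xi: (\xi_i)_{i=1}^n=\mathbf{x}\})$ for $\mathbf{x}\in A^{(n)}$. For a finite sequence $\mathbf{x}=(x_i)_{i=1}^n$ ($n\ge2$) let $\mathbf{x}_\flat:=(x_i)_{i=1}^{n-1}$, and for a set $C\subseteq A^{(n+1)}$ let $C_\flat:=\{\mathbf{x}_\flat:\mathbf{x}\in C\}$. Condition (B) w.r.t. $h$: for $P$-almost every $(\xi_n)_{n\in\mathbb{Z}}\in A^{\mathbb{Z}}$ the limit $\lim_{n\to\infty}-\frac1n\log P^{(n)}((\xi_i)_{i=1}^n)$ exists and equals $h$. Condition (B* ) w.r.t. $h$: for every $\varepsilon>0$ there exist subsets $C_\varepsilon^{(n)}\subseteq A^{(n)}$, $n\in\mathbb{N}$, and a number $N(\varepsilon)$ such that (1) $C_\varepsilon^{(n)}=(C_\varepsilon^{(n+1)})_\flat$ for all $n\ge1$; (2) $\#C_\varepsilon^{(n)}\in(e^{n(h-\varepsilon)},e^{n(h+\varepsilon)})$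 for $n\ge N(\varepsilon)$; (3) $P^{(n)}(\mathbf{x})<e^{-n(h-\varepsilon)}$ for all $n\ge N(\varepsilon)$ and all $\mathbf{x}\in C_\varepsilon^{(n)}$; (4) $P^{(n)}(C_\varepsilon^{(n)})>1-\varepsilon$ for all $n\ge 1$. *)

From HB Require Import structures.
From mathcomp Require Import all_boot all_order all_algebra.
From mathcomp Require Import all_classical all_reals all_analysis.
Set Implicit Arguments. Unset Strict Implicit. Unset Printing Implicit Defensive.
Import Order.TTheory GRing.Theory Num.Theory.
Import numFieldNormedType.Exports.
Local Open Scope classical_set_scope.
Local Open Scope ring_scope.


(* the sequence space A^Z ; the witness a0 is only used to equip it with
   the (pointed) structure required by MathComp-Analysis measurable types *)
Definition seqZ (A : finType) (a0 : A) := int -> A.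
Arguments seqZ {A} a0.
HB.instance Definition _ (A : finType) (a0 : A) := Choice.on (seqZ a0).
HB.instance Definition _ (A : finType) (a0 : A) :=
  isPointed.Build (seqZ a0) (fun=> a0).

Definition cylinders (A : finType) (a0 : A) : set (set (seqZ a0)) :=
  [set C | exists (s : seq int) (x : int -> A),
           C = [set xi : seqZ a0 | forall i, i \in s -> xi i = x i]].
Arguments cylinders {A} a0.

Definition AZ (A : finType) (a0 : A) := g_sigma_algebraType (cylinders a0).
Arguments AZ {A} a0.


Definition block (A : finType) (a0 : A) (n : nat) (xi : AZ a0) : {ffun 'I_n -> A} :=
  [ffun i : 'I_n => xi (i.+1)%:Z].

Definition marg (R : realType) (A : finType) (a0 : A)
  (P : probability (AZ a0) R) (n : nat) (C : {set {ffun 'I_n -> A}}) : R :=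
  fine (P [set xi : AZ a0 | block n xi \in C]).

Definition marg1 (R : realType) (A : finType) (a0 : A)
  (P : probability (AZ a0) R) (n : nat) (x : {ffun 'I_n -> A}) : R :=
  marg P [set x].

Definition flat (A : finType) (n : nat) (x : {ffun 'I_n.+1 -> A}) : {ffun 'I_n -> A} :=
  [ffun i : 'I_n => x (widen_ord (leqnSn n) i)].

Definition flatset (A : finType) (n : nat) (C : {set {ffun 'I_n.+1 -> A}}) :
  {set {ffun 'I_n -> A}} := [set flat x | x in C].

Definition condB (R : realType) (A : finType) (a0 : A)
  (P : probability (AZ a0) R) (h : R) : Prop :=
  {ae P, forall xi : AZ a0,
     (fun n : nat => - ln (marg1 P (block n xi)) / n%:R) @ \oo --> h}.

Definition condBstar (R : realType) (A : finType) (a0 : A)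
  (P : probability (AZ a0) R) (h : R) : Prop :=
  forall eps : R, 0 < eps ->
  exists (C : forall n : nat, {set {ffun 'I_n -> A}}) (N : nat),
    [/\ (forall n : nat, (1 <= n)%N -> C n = flatset (C n.+1)),
        (forall n : nat, (1 <= n)%N -> (N <= n)%N ->
           expR (n%:R * (h - eps)) < (#|C n|)%:R < expR (n%:R * (h + eps))),
        (forall n : nat, (1 <= n)%N -> (N <= n)%N ->
           forall x, x \in C n -> marg1 P x < expR (- (n%:R * (h - eps))))
      & (forall n : nat, (1 <= n)%N -> marg P (C n) > 1 - eps)].

From mathcomp Require Import all_boot all_order all_algebra.
From mathcomp Require Import all_classical all_reals all_analysis.
From mathcomp Require Import ring lra.
Import Order.TTheory GRing.Theory Num.Theory.
Set Implicit Arguments. Unset Strict Implicit. Unset Printing Implicit Defensive.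
Local Open Scope classical_set_scope.
Local Open Scope ring_scope.

(* (B) => (B* ): by Egorov's theorem, -1/n log P^(n)(xi_1..xi_n) converges to h
   uniformly outside a set of small probability.  The blocks of the sequences
   in that good set form a family C^(n) closed under dropping the last
   coordinate, with P^(n)(C^(n)) close to 1 and every element of probability
   between e^{-n(h+eps)} and e^{-n(h-eps)}; counting then pins #C^(n) between
   e^{n(h-2eps)} and e^{n(h+2eps)}.
   (B* ) => (B): by nestedness, the sequences whose blocks ever leave C^(n) have
   probability at most eps.  The blocks of C^(n) of probability below
   e^{-n(h+2eps)} have total probability at most #C^(n) e^{-n(h+2eps)}, i.e.
   e^{-n eps}, a summable bound; so outside a set of small probability the
   rate -1/n log P^(n) is eventually within 2eps of h, and letting the
   exceptional probability tend to 0 gives the almost sure statement. *)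

Lemma invn_truncnS_le (R : archiRealFieldType) (e : R) : 0 < e ->
  (Num.truncn e^-1).+1%:R^-1 <= e.
Proof.
move=> e0; rewrite -[leRHS]invrK lef_pV2 ?posrE ?invr_gt0 ?ltr0n //.
exact/ltW/truncnS_gt.
Qed.

Lemma geometric_tail_le (R : realFieldType) (q : R) (M K : nat) : 0 <= q < 1 ->
  \sum_(M <= i < K) q ^+ i <= q ^+ M / (1 - q).
Proof.
move=> /andP[q0 q1]; have q1' : 0 < 1 - q by rewrite subr_gt0.
have [KM|/ltnW MK] := leqP K M.
  by rewrite big_geq // divr_ge0 ?exprn_ge0 // ltW.
rewrite -(subnKC MK) geometric_partial_tail geometric_seriesE ?lt_eqF //=.
rewrite ler_pM2r ?invr_gt0 // ler_piMr ?exprn_ge0 // gerBl.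
exact: exprn_ge0.
Qed.

Lemma measure_bigcup_geometric_tail d (T : measurableType d) (R : realType)
    (mu : {measure set T -> \bar R}) (F : nat -> set T) (q : R) (M : nat) :
  0 <= q < 1 -> (forall n, measurable (F n)) ->
  (forall n, (M <= n)%N -> (mu (F n) <= (q ^+ n)%:E)%E) ->
  (mu (\bigcup_(n in ~` `I_M) F n) <= (q ^+ M / (1 - q))%:E)%E.
Proof.
move=> q01 mF muF.
have mU : measurable (\bigcup_(n in ~` `I_M) F n) by exact: bigcup_measurable.
apply: le_trans (measure_sigma_subadditive_tail mu mF mU (@subset_refl _ _)) _.
apply: lime_le; first exact: is_cvg_nneseries.
apply: nearW => K; apply: (@le_trans _ _ (\sum_(M <= i < K) (q ^+ i)%:E)%E).
  rewrite big_nat_cond [leRHS]big_nat_cond.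
  by apply: lee_sum => i /andP[/andP[Mi _] _]; exact: muF.
by rewrite sumEFin lee_fin geometric_tail_le.
Qed.

Lemma ae_of_small_exceptional d (T : measurableType d) (R : realType)
    (mu : {measure set T -> \bar R}) (Q : T -> Prop) :
  (forall e : R, 0 < e -> exists S : set T,
     [/\ measurable S, (mu S <= e%:E)%E & ~` [set x | Q x] `<=` S]) ->
  {ae mu, forall x, Q x}.
Proof.
move=> small.
have /all_sig[S /all_and3[mS muS QS]] : forall k : nat, {S : set T |
    [/\ measurable S, (mu S <= k.+1%:R^-1%:E)%E & ~` [set x | Q x] `<=` S]}.
  by move=> k; apply/cid/small; rewrite invr_gt0.
have mI : measurable (\bigcap_k S k) by exact: bigcapT_measurable.
exists (\bigcap_k S k); split => //; last by move=> x nQx k _; exact: QS.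
apply/eqP; rewrite eq_le measure_ge0 andbT; apply/lee_addgt0Pr => e e0.
rewrite add0e; pose k := Num.truncn e^-1.
have muIk : (mu (\bigcap_k S k) <= mu (S k))%E.
  by apply: le_measure; rewrite ?inE //; exact: bigcap_inf.
by apply: le_trans muIk (le_trans (muS k) _); rewrite lee_fin invn_truncnS_le.
Qed.

Lemma expR_lt_half (R : realType) (x : R) : 1 < x -> expR (- x) < 1 / 2.
Proof.
move=> x1; rewrite expRN mul1r ltf_pV2 ?posrE ?expR_gt0 //.
apply: lt_trans (expR_gt1Dx (oner_neq0 R)) _; by rewrite ltr_expR.
Qed.

Section InformationRate.
Variable R : realType.

Lemma neg_ln_div_le (n : nat) (p c : R) : (0 < n)%N -> 0 < p ->
  (- ln p / n%:R <= c) = (expR (- (n%:R * c)) <= p).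
Proof.
move=> n0 p0; rewrite ler_pdivrMr ?ltr0n // [c * _]mulrC lerNl.
by rewrite -{2}(@lnK R p) ?posrE // ler_expR.
Qed.

Lemma neg_ln_div_lt (n : nat) (p c : R) : (0 < n)%N -> 0 < p ->
  (- ln p / n%:R < c) = (expR (- (n%:R * c)) < p).
Proof.
move=> n0 p0; rewrite ltr_pdivrMr ?ltr0n // [c * _]mulrC ltrNl.
by rewrite -{2}(@lnK R p) ?posrE // ltr_expR.
Qed.

Lemma ge_neg_ln_div (n : nat) (p c : R) : (0 < n)%N -> 0 < p ->
  (c <= - ln p / n%:R) = (p <= expR (- (n%:R * c))).
Proof. by move=> n0 p0; rewrite leNgt neg_ln_div_lt // -leNgt. Qed.

Lemma gt_neg_ln_div (n : nat) (p c : R) : (0 < n)%N -> 0 < p ->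
  (c < - ln p / n%:R) = (p < expR (- (n%:R * c))).
Proof. by move=> n0 p0; rewrite ltNge neg_ln_div_le // -ltNge. Qed.

End InformationRate.

Section Cylinders.
Variables (A : finType) (a0 : A).

Lemma measurable_block_eq (n : nat) (x : {ffun 'I_n -> A}) :
  measurable [set xi : AZ a0 | block n xi = x].
Proof.
pose y (j : int) : A :=
  if j is Posz k.+1 then oapp (fun i : 'I_n => x i) a0 (insub k) else a0.
apply: sub_sigma_algebra; exists [seq (val i).+1%:Z | i <- enum 'I_n], y.
apply/seteqP; split => xi /=.
- by move=> xix j /mapP [i _ ->]; rewrite /y valK /= -xix /block ffunE.
- move=> xi_y; apply/ffunP => i; rewrite /block ffunE.
  have := xi_y (val i).+1%:Z; rewrite /y valK; apply.
  by apply/mapP; exists i; rewrite ?mem_enum.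
Qed.

Lemma measurable_block (n : nat) (Q : {ffun 'I_n -> A} -> Prop) :
  measurable [set xi : AZ a0 | Q (block n xi)].
Proof.
have -> : [set xi : AZ a0 | Q (block n xi)] =
    \bigcup_(x in Q) [set xi : AZ a0 | block n xi = x].
  apply/seteqP; split => [xi Qxi|xi [x Qx xix]] /=; last by rewrite xix.
  by exists (block n xi).
by apply: fin_bigcup_measurable => // x _; exact: measurable_block_eq.
Qed.

Lemma measurable_block_in (n : nat) (C : {set {ffun 'I_n -> A}}) :
  measurable [set xi : AZ a0 | block n xi \in C].
Proof. exact: (measurable_block (fun x => x \in C)). Qed.

Lemma flat_block (n : nat) (xi : AZ a0) : flat (block n.+1 xi) = block n xi.
Proof. by apply/ffunP => i; rewrite /flat /block !ffunE. Qed.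

Definition block_image (S : set (AZ a0)) (n : nat) : {set {ffun 'I_n -> A}} :=
  [set x | `[< exists2 xi, S xi & block n xi = x >]].

Lemma mem_block_image (S : set (AZ a0)) (n : nat) (xi : AZ a0) :
  S xi -> block n xi \in block_image S n.
Proof. by move=> Sxi; rewrite inE; apply/asboolP; exists xi. Qed.

Lemma block_image_flat (S : set (AZ a0)) (n : nat) :
  block_image S n = flatset (block_image S n.+1).
Proof.
apply/setP => x; apply/idP/imsetP => [|[y]].
- rewrite inE => /asboolP [xi Sxi <-].
  by exists (block n.+1 xi); rewrite ?mem_block_image ?flat_block.
- by rewrite inE => /asboolP [xi Sxi <-] ->; rewrite flat_block mem_block_image.
Qed.

End Cylinders.

Section Marginals.
Variables (R : realType) (A : finType) (a0 : A) (P : probability (AZ a0) R).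

Lemma margE (n : nat) (C : {set {ffun 'I_n -> A}}) :
  (marg P C)%:E = P [set xi : AZ a0 | block n xi \in C].
Proof.
have mC := measurable_block_in (a0:=a0) C.
rewrite /marg fineK // ge0_fin_numE //.
by rewrite (le_lt_trans (probability_le1 P mC)) ?ltry.
Qed.

Lemma marg1E (n : nat) (x : {ffun 'I_n -> A}) :
  (marg1 P x)%:E = P [set xi : AZ a0 | block n xi = x].
Proof.
rewrite /marg1 margE; congr (P _).
by apply/seteqP; split => xi /=; rewrite inE => /eqP.
Qed.

Lemma marg_sum (n : nat) (C : {set {ffun 'I_n -> A}}) :
  marg P C = \sum_(x in C) marg1 P x.
Proof.
apply: EFin_inj; rewrite margE -sumEFin.
under eq_bigr do rewrite marg1E.
have -> : [set xi : AZ a0 | block n xi \in C] =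
    \bigcup_(x in [set` enum C]) [set xi : AZ a0 | block n xi = x].
  apply/seteqP; split => [xi xiC|xi [x + xix]] /=.
    by exists (block n xi); rewrite /= ?mem_enum.
  by rewrite /= mem_enum xix.
rewrite measure_fin_bigcup //; last by move=> x _; exact: measurable_block_eq.
- by rewrite -fsbig_seq ?enum_uniq // big_enum.
- by move=> x y _ _ [xi /= [-> ->]].
Qed.

Lemma marg1_ge0 (n : nat) (x : {ffun 'I_n -> A}) : 0 <= marg1 P x.
Proof. by rewrite -lee_fin marg1E. Qed.

Lemma marg_le1 (n : nat) (C : {set {ffun 'I_n -> A}}) : marg P C <= 1.
Proof.
by rewrite -lee_fin margE probability_le1 //; exact: measurable_block_in.
Qed.

Lemma measure_le_marg (n : nat) (C : {set {ffun 'I_n -> A}}) (S : set (AZ a0)) :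
  measurable S -> (forall xi, S xi -> block n xi \in C) ->
  (P S <= (marg P C)%:E)%E.
Proof.
by move=> mS SC; rewrite margE le_measure ?inE //; exact: measurable_block_in.
Qed.

Lemma ae_marg1_gt0 :
  {ae P, forall (xi : AZ a0) (n : nat), 0 < marg1 P (block n xi)}.
Proof.
apply: ae_foralln => n.
pose Z : {set {ffun 'I_n -> A}} := [set x | marg1 P x == 0]%SET.
exists [set xi : AZ a0 | block n xi \in Z]; split.
- exact: measurable_block_in.
- by rewrite -[LHS]margE marg_sum big1 // => x; rewrite inE => /eqP.
- by move=> xi /= /negP; rewrite inE lt_def marg1_ge0 andbT negbK.
Qed.

Lemma marg_le_card (n : nat) (C : {set {ffun 'I_n -> A}}) (c : R) :
  (forall x, x \in C -> marg1 P x <= c) -> marg P C <= #|C|%:R * c.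
Proof.
by move=> Cc; rewrite marg_sum mulrC mulr_natr -sumr_const; exact: ler_sum.
Qed.

Lemma card_le_marg (n : nat) (C : {set {ffun 'I_n -> A}}) (c : R) :
  (forall x, x \in C -> c <= marg1 P x) -> #|C|%:R * c <= marg P C.
Proof.
by move=> Cc; rewrite marg_sum mulrC mulr_natr -sumr_const; exact: ler_sum.
Qed.

Lemma marg_light_le (n : nat) (C : {set {ffun 'I_n -> A}}) (c : R) : 0 <= c ->
  marg P [set x in C | marg1 P x < c] <= #|C|%:R * c.
Proof.
move=> c0; apply: le_trans (marg_le_card (c:=c) _) _.
  by move=> x; rewrite inE => /andP[_ /ltW].
rewrite ler_wpM2r // ler_nat subset_leq_card //.
by apply/fintype.subsetP => x; rewrite inE => /andP[].
Qed.

End Marginals.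

Section CondB_CondBstar.
Variables (R : realType) (A : finType) (a0 : A).
Variables (P : probability (AZ a0) R) (h : R).

Definition typical_block (e : R) (n : nat) (x : {ffun 'I_n -> A}) : bool :=
  expR (- (n%:R * (h + e))) <= marg1 P x <= expR (- (n%:R * (h - e))).

Definition eventually_typical (e : R) (M : nat) : set (AZ a0) :=
  [set xi | forall n, (M < n)%N -> typical_block e (block n xi)].

Lemma measurable_eventually_typical (e : R) (M : nat) :
  measurable (eventually_typical e M).
Proof.
have -> : eventually_typical e M =
    \bigcap_(n in [set n | (M < n)%N]) [set xi | typical_block e (block n xi)].
  by apply/seteqP; split => xi /= Hxi n /Hxi.
apply: bigcap_measurable; first by exists M.+1 => /=.
by move=> n _; exact: (measurable_block (typical_block e (n:=n))).
Qed.

Lemma eventually_typical_nondecreasing (e : R) :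
  nondecreasing_seq (eventually_typical e).
Proof.
move=> m1 m2 m12; apply/asboolP => xi /= Hxi n m2n.
by apply: Hxi; exact: leq_ltn_trans m2n.
Qed.

Lemma condB_ae_eventually_typical (e : R) : condB P h -> 0 < e ->
  {ae P, forall xi : AZ a0, exists M, eventually_typical e M xi}.
Proof.
move=> HB e0; apply: filterS2 HB (ae_marg1_gt0 P) => xi + pos.
move=> /cvgrPdist_le /(_ e e0) [M _ HM]; exists M => n Mn.
have n0 : (0 < n)%N by apply: leq_ltn_trans Mn.
have := HM n (ltnW Mn); rewrite /= ler_distlC => /andP[lo hi].
by rewrite /typical_block -neg_ln_div_le // -ge_neg_ln_div // lo hi.
Qed.

Lemma condB_eventually_typical (e dl : R) : condB P h -> 0 < e -> 0 < dl ->
  exists M, ((1 - dl)%:E <= P (eventually_typical e M))%E.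
Proof.
move=> HB e0 dl0; have mG := measurable_eventually_typical e.
have mU : measurable (\bigcup_M eventually_typical e M).
  exact: bigcup_measurable.
have PU : P (\bigcup_M eventually_typical e M) = 1%E.
  apply/eqP; rewrite eq_le probability_le1 //=.
  have [N [mN PN /subsetCl NG]] := condB_ae_eventually_typical HB e0.
  have <- : P (~` N) = 1%E by rewrite probability_setC // PN sube0.
  apply: le_measure; rewrite ?inE //.
    exact: measurableC.
  by move=> xi /NG [M GM]; exists M.
have cvgG : (P \o eventually_typical e) n @[n --> \oo] --> 1%E.
  rewrite -PU; apply: nondecreasing_cvg_mu => //.
  exact: eventually_typical_nondecreasing.
have : \forall n \near \oo, ((1 - dl)%:E <= P (eventually_typical e n))%E.
  apply: lte_lim.
  - move=> m1 m2 m12; apply: le_measure; rewrite ?inE //.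
    exact/asboolP/eventually_typical_nondecreasing.
  - by apply/cvg_ex; exists 1%E.
  - by rewrite (cvg_lim _ cvgG) // lte_fin gtrBl.
by case=> M _ /(_ M (leqnn M)); exists M.
Qed.

Lemma card_typical_bounds (n : nat) (C : {set {ffun 'I_n -> A}}) (e : R) :
  (forall x, x \in C -> typical_block e x) -> 1 / 2 <= marg P C -> 1 < n%:R * e ->
  expR (n%:R * (h - (e + e))) < #|C|%:R < expR (n%:R * (h + (e + e))).
Proof.
move=> Ctyp Chalf ne1; apply/andP; split.
- rewrite -(ltr_pM2r (expR_gt0 (- (n%:R * (h - e))))) -expRD.
  rewrite (_ : n%:R * (h - (e + e)) - n%:R * (h - e) = - (n%:R * e)).
    2: by ring.
  apply: lt_le_trans (expR_lt_half ne1) (le_trans Chalf (marg_le_card _)).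
  by move=> x /Ctyp /andP[].
- rewrite -(ltr_pM2r (expR_gt0 (- (n%:R * (h + e))))) -expRD.
  rewrite (_ : n%:R * (h + (e + e)) - n%:R * (h + e) = n%:R * e).
    2: by ring.
  apply: le_lt_trans (card_le_marg (P := P) (c := expR (- (n%:R * (h + e)))) _) _.
    by move=> x /Ctyp /andP[].
  apply: le_lt_trans (marg_le1 P C) _.
  by rewrite -[X in X < _]expR0 ltr_expR (lt_trans ltr01 ne1).
Qed.

Lemma condB_condBstar : condB P h -> condBstar P h.
Proof.
move=> HB eps eps0; set e := eps / 2.
have e0 : 0 < e by rewrite divr_gt0.
have epsE : eps = e + e by rewrite /e -splitr.
set dl := Num.min e (1 / 2).
have dl0 : 0 < dl by rewrite lt_min e0 divr_gt0.
have dl_e : dl <= e by rewrite ge_min lexx.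
have dl_half : dl <= 1 / 2 by rewrite ge_min lexx orbT.
have [M PG] := condB_eventually_typical HB e0 dl0.
pose C := block_image (eventually_typical e M).
have typC n x : x \in C n -> (M < n)%N -> typical_block e x.
  by rewrite inE => /asboolP [xi Gxi <-] /Gxi.
have margC n : 1 - dl <= marg P (C n).
  rewrite -lee_fin; apply: le_trans PG (measure_le_marg _ _ _).
    exact: measurable_eventually_typical.
  by move=> xi /mem_block_image.
exists C, (maxn M.+1 (Num.truncn e^-1).+1); split.
- by move=> n _; exact: block_image_flat.
- move=> n _; rewrite geq_max => /andP[Mn Kn].
  have ne1 : 1 < n%:R * e.
    rewrite -[X in X < _](mulVf (lt0r_neq0 e0)) ltr_pM2r //.
    by apply: lt_le_trans (truncnS_gt _) _; rewrite ler_nat.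
  rewrite epsE; apply: card_typical_bounds => //; first by move=> x /typC; apply.
  by apply: le_trans (margC n); lra.
- move=> n _; rewrite geq_max => /andP[Mn _] x /typC /(_ Mn) /andP[_ hi].
  apply: le_lt_trans hi _; rewrite ltr_expR ltrN2 ltr_pM2l ?ltr0n //.
    by rewrite ltrD2l ltrN2 epsE ltrDr.
  by apply: leq_trans Mn.
- by move=> n _; apply: lt_le_trans (margC n); lra.
Qed.

End CondB_CondBstar.

Section CondBstar_CondB.
Variables (R : realType) (A : finType) (a0 : A).
Variables (P : probability (AZ a0) R) (h : R).

Lemma prob_not_nested_blocks (C : forall n, {set {ffun 'I_n -> A}}) (ep : R) :
  (forall n, (1 <= n)%N -> C n = flatset (C n.+1)) ->
  (forall n, (1 <= n)%N -> 1 - ep < marg P (C n)) ->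
  (P (~` \bigcap_n [set xi : AZ a0 | block n.+1 xi \in C n.+1]) <= ep%:E)%E.
Proof.
move=> Cflat Cbig; pose F n := [set xi : AZ a0 | block n.+1 xi \in C n.+1].
have mF n : measurable (F n) by exact: measurable_block_in.
have mG : measurable (\bigcap_n F n) by exact: bigcapT_measurable.
have nested : nonincreasing_seq F.
  apply/nonincreasing_seqP => n; apply/asboolP => xi; rewrite /F /=.
  by rewrite (Cflat n.+1 erefl) -[block n.+1 xi]flat_block; apply: imset_f.
have cvgF : (P \o F) n @[n --> \oo] --> P (\bigcap_n F n).
  apply: nonincreasing_cvg_mu => //.
  by apply: le_lt_trans (probability_le1 P (mF 0%N)) _; rewrite ltry.
have PG : ((1 - ep)%:E <= P (\bigcap_n F n))%E.
  rewrite -(cvg_lim _ cvgF) //; apply: lime_ge.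
    by apply/cvg_ex; exists (P (\bigcap_n F n)).
  by apply: nearW => n; rewrite /= /F -margE lee_fin ltW ?Cbig.
rewrite probability_setC //; move: PG; rewrite -(fineK (fin_num_measure P _ mG)).
by rewrite lee_fin -EFinB lee_fin; lra.
Qed.

Definition light_seqs (C : forall n, {set {ffun 'I_n -> A}}) (ep : R) (n : nat) :
    set (AZ a0) :=
  [set xi | block n xi \in
     [set x in C n | marg1 P x < expR (- (n%:R * (h + ep + ep)))]%SET].

Lemma prob_light_seqs (C : forall n, {set {ffun 'I_n -> A}}) (ep : R) (n : nat) :
  #|C n|%:R < expR (n%:R * (h + ep)) ->
  (P (light_seqs C ep n) <= (expR (- ep) ^+ n)%:E)%E.
Proof.
move=> Ccard; rewrite -margE lee_fin.
apply: le_trans (marg_light_le _ _ (ltW (expR_gt0 _))) _.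
apply: le_trans (ler_wpM2r (ltW (expR_gt0 _)) (ltW Ccard)) _.
by rewrite -expRD -expRM_natl [X in expR X <= _](_ : _ = n%:R * - ep) //; ring.
Qed.

Lemma prob_eventually_light (C : forall n, {set {ffun 'I_n -> A}}) (ep dl : R)
    (N : nat) :
  (forall n, (1 <= n)%N -> (N <= n)%N -> #|C n|%:R < expR (n%:R * (h + ep))) ->
  0 < ep -> 0 < dl -> exists2 M, (maxn N 1 <= M)%N &
    (P (\bigcup_(n in ~` `I_M) light_seqs C ep n) <= dl%:E)%E.
Proof.
move=> Ccard ep0 dl0; set q := expR (- ep).
have q01 : 0 <= q < 1 by rewrite expR_ge0 -expR0 ltr_expR oppr_lt0.
have [q0 q1] := andP q01.
have [M0 _ qM0] : \forall n \near \oo, q ^+ n < (1 - q) * dl.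
  have qn1 : `|q| < 1 by rewrite ger0_norm.
  have t0 : 0 < (1 - q) * dl by rewrite mulr_gt0 // subr_gt0.
  exact: (cvgr_lt _ (cvg_expr qn1) _ t0).
exists (maxn M0 (maxn N 1)); first by rewrite leq_maxr.
have mL n : measurable (light_seqs C ep n) by exact: measurable_block_in.
apply: le_trans (measure_bigcup_geometric_tail q01 mL _) _.
  by move=> n; rewrite !geq_max => /and3P[_ Nn n0]; exact/prob_light_seqs/Ccard.
rewrite lee_fin ler_pdivrMr ?subr_gt0 // mulrC ltW //.
by apply: qM0; rewrite /= leq_maxl.
Qed.

(* Since [ln 0 = 0], this is junk on null blocks; [ae_marg1_gt0] rules
   them out. *)
Definition info_rate (xi : AZ a0) (n : nat) : R :=
  - ln (marg1 P (block n xi)) / n%:R.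

Lemma condBstar_ae_rate_near (e : R) : condBstar P h -> 0 < e ->
  {ae P, forall xi : AZ a0, (forall n, 0 < marg1 P (block n xi)) ->
     exists M, forall n, (M <= n)%N -> h - e <= info_rate xi n <= h + e}.
Proof.
move=> HBs e0; apply: ae_of_small_exceptional => dl dl0.
set ep := Num.min (e / 2) (dl / 2).
have ep0 : 0 < ep by rewrite lt_min !divr_gt0.
have ep_e : ep <= e / 2 by rewrite ge_min lexx.
have ep_dl : ep <= dl / 2 by rewrite ge_min lexx orbT.
have [C [N [Cflat Ccard Cmarg1 Cmarg]]] := HBs ep ep0.
pose G := \bigcap_n [set xi : AZ a0 | block n.+1 xi \in C n.+1].
have mG : measurable G.
  by apply: bigcapT_measurable => n; exact: measurable_block_in.
have [M NM PL] : exists2 M, (maxn N 1 <= M)%N &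
    (P (\bigcup_(n in ~` `I_M) light_seqs C ep n) <= (dl / 2)%:E)%E.
  apply: prob_eventually_light ep0 _; last by rewrite divr_gt0.
  by move=> n n0 Nn; case/andP: (Ccard n n0 Nn).
have mL : measurable (\bigcup_(n in ~` `I_M) light_seqs C ep n).
  by apply: bigcup_measurable => n _; exact: measurable_block_in.
exists (~` G `|` \bigcup_(n in ~` `I_M) light_seqs C ep n); split.
- by apply: measurableU => //; exact: measurableC.
- apply: le_trans (measureU2 P (measurableC mG) mL) _.
  apply: le_trans (leeD (prob_not_nested_blocks Cflat Cmarg) PL) _.
  by rewrite -EFinD lee_fin; lra.
move=> xi /= nQ; apply: contrapT => nS; apply: nQ => pos; exists M => n Mn.
have [Nn n0] : (N <= n)%N /\ (0 < n)%N.
  by apply/andP; rewrite -geq_max (leq_trans NM).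
have xiC : block n xi \in C n.
  have Gxi : G xi by apply: contrapT => nG; apply: nS; left.
  by have := Gxi n.-1 I; rewrite /= prednK.
have lo : h - ep < info_rate xi n.
  by rewrite /info_rate gt_neg_ln_div // (Cmarg1 n n0 Nn _ xiC).
have hi : info_rate xi n <= h + ep + ep.
  rewrite /info_rate neg_ln_div_le // leNgt; apply/negP => light.
  apply: nS; right; exists n; first by rewrite /= ltnNge Mn.
  by rewrite /light_seqs /= inE xiC.
by apply/andP; split; lra.
Qed.

Lemma condBstar_condB : condBstar P h -> condB P h.
Proof.
move=> HBs.
have near_h : {ae P, forall (xi : AZ a0) (k : nat),
    (forall n, 0 < marg1 P (block n xi)) -> exists M, forall n, (M <= n)%N ->
      h - k.+1%:R^-1 <= info_rate xi n <= h + k.+1%:R^-1}.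
  apply: ae_foralln => k.
  by apply: condBstar_ae_rate_near HBs _; rewrite invr_gt0.
apply: filterS2 near_h (ae_marg1_gt0 P) => xi near pos.
apply/cvgrPdist_le => e e0.
have [M HM] := near (Num.truncn e^-1) pos.
have ke := invn_truncnS_le e0.
exists M => // n /= Mn; rewrite ler_distlC -/(info_rate xi n).
move: (HM n Mn) ke; move: (info_rate xi n) (_.+1%:R^-1) => r k /andP[lo hi] ke.
by apply/andP; split; lra.
Qed.

End CondBstar_CondB.

Theorem lemma2p1 (R : realType) (A : finType) (a0 : A)
  (P : probability (AZ a0) R) (h : R) (hge0 : 0 <= h) :
  condB P h <-> condBstar P h.
Proof. by split; [exact: condB_condBstar | exact: condBstar_condB]. Qed.
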